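(* Let $(T,\eta,\mu)$ be a strictly positive monad on $\mathsf{Set}$ and let $(A,e)$ be an indiscrete $T$-algebra. Then the partial evaluation relation on $TA$ is the identity relation on $TA$, and $e:TA\to A$ is a bijection.
   Context: A monad $(T,\eta,\mu)$ on $\mathsf{Set}$ is strictly positive if for every set $X$, every $x\in X$ and every $\tau\in TTX$, $\mu_X(\tau)=\eta_X(x)$ implies $\tau=\eta_{TX}\eta_X(x)$. A $T$-algebra $(A,e)$ is indiscrete if for all $t_0,t_1\in TA$ with $e(t_0)=e(t_1)$ there is $\tau\in TTA$ with $\mu_A(\tau)=t_0$ and $(Te)(\tau)=t_1$. The partial evaluation relation on $TA$ is $\{(\mu_A(\tau),(Te)(\tau)):\tau\in TTA\}$. *)

(* monads on Set modelled as monads on Rocq's Type. *)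
Set Implicit Arguments.

Record Monad := {
  T :> Type -> Type;
  fmap : forall (A B : Type), (A -> B) -> T A -> T B;
  eta : forall (A : Type), A -> T A;
  mu : forall (A : Type), T (T A) -> T A;
  fmap_id : forall (A : Type) (x : T A), fmap (fun a => a) x = x;
  fmap_comp : forall (A B C : Type) (f : A -> B) (g : B -> C) (x : T A),
      fmap (fun a => g (f a)) x = fmap g (fmap f x);
  eta_nat : forall (A B : Type) (f : A -> B) (a : A),
      fmap f (eta a) = eta (f a);
  mu_nat : forall (A B : Type) (f : A -> B) (x : T (T A)),
      fmap f (mu x) = mu (fmap (fmap f) x);
  mu_eta_l : forall (A : Type) (t : T A), mu (eta t) = t;
  mu_eta_r : forall (A : Type) (t : T A), mu (fmap (@eta A) t) = t;
  mu_assoc : forall (A : Type) (x : T (T (T A))),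
      mu (mu x) = mu (fmap (@mu A) x)
}.

Arguments fmap {m A B} f x.
Arguments eta {m A} a.
Arguments mu {m A} x.

Definition strictly_positive (M : Monad) : Prop :=
  forall (X : Type) (x : X) (tau : M (M X)),
    mu tau = eta x -> tau = eta (eta x).

Definition is_algebra (M : Monad) (A : Type) (e : M A -> A) : Prop :=
  (forall a : A, e (eta a) = a) /\
  (forall t : M (M A), e (mu t) = e (fmap e t)).

Definition indiscrete (M : Monad) (A : Type) (e : M A -> A) : Prop :=
  forall t0 t1 : M A, e t0 = e t1 ->
    exists tau : M (M A), mu tau = t0 /\ fmap e tau = t1.

Definition partial_evaluation (M : Monad) (A : Type) (e : M A -> A)
    (t0 t1 : M A) : Prop :=
  exists tau : M (M A), mu tau = t0 /\ fmap e tau = t1.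

Definition bijection (X Y : Type) (f : X -> Y) : Prop :=
  (forall x y : X, f x = f y -> x = y) /\ (forall y : Y, exists x : X, f x = y).


(* Indiscreteness relates [eta (e t)] to [t] through some [tau] with
   [mu tau = eta (e t)]; strict positivity forces [tau = eta (eta (e t))],
   whence [t = fmap e tau = eta (e t)].  So [eta] is inverse to [e], and
   partial evaluation, which preserves [e], collapses to equality. *)

Section EilenbergMooreAlgebra.

Context {M : Monad} {A : Type} {e : M A -> A}.
Hypothesis e_eta : forall a : A, e (eta a) = a.
Hypothesis e_mu : forall t : M (M A), e (mu t) = e (fmap e t).

Lemma partial_evaluation_eval (t0 t1 : M A) :
  partial_evaluation M e t0 t1 -> e t0 = e t1.
Proof. intros [tau [<- <-]]. apply e_mu. Qed.

Lemma eval_surjective (a : A) : exists t : M A, e t = a.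
Proof. exists (eta a). apply e_eta. Qed.

Hypothesis M_strictly_positive : strictly_positive M.
Hypothesis e_indiscrete : indiscrete M e.

Lemma eta_eval (t : M A) : eta (e t) = t.
Proof.
  destruct (e_indiscrete (eta (e t)) t (e_eta (e t))) as [tau [Hmu Hfmap]].
  apply M_strictly_positive in Hmu.
  rewrite <- Hfmap, Hmu, eta_nat, e_eta. reflexivity.
Qed.

Lemma eval_injective (t0 t1 : M A) : e t0 = e t1 -> t0 = t1.
Proof. intro He. rewrite <- (eta_eval t0), <- (eta_eval t1), He. reflexivity. Qed.

Lemma partial_evaluation_refl (t : M A) : partial_evaluation M e t t.
Proof.
  exists (eta t); split.
  - apply mu_eta_l.
  - rewrite eta_nat. apply eta_eval.
Qed.

End EilenbergMooreAlgebra.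

Theorem proposition3p14 (M : Monad) (A : Type) (e : M A -> A) :
  strictly_positive M -> is_algebra M e -> indiscrete M e ->
  (forall t0 t1 : M A, partial_evaluation M e t0 t1 <-> t0 = t1) /\
  bijection e.
Proof.
  intros Hsp [He_eta He_mu] Hind.
  split; [| split].
  - intros t0 t1; split.
    + intro Hpe. apply (eval_injective He_eta Hsp Hind).
      exact (partial_evaluation_eval He_mu t0 t1 Hpe).
    + intros <-. exact (partial_evaluation_refl He_eta Hsp Hind t0).
  - exact (eval_injective He_eta Hsp Hind).
  - exact (eval_surjective He_eta).
Qed.
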